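(* Let $B$ be a composition of $n$ finite Blaschke products each of degree $2$. Then $B$ has at most $n$ distinct critical values.
   Context: A finite Blaschke product of degree $d$ is $B(z)=\gamma\prod_{j=1}^d \frac{z-a_j}{1-\overline{a_j}z}$ with $a_j\in\mathbb{D}$ and $|\gamma|=1$. The set of critical values of $B$ is $\{w\in\mathbb{D}: w=B(z)\text{ for some } z\in\mathbb{D} \text{ with } B'(z)=0\}$. *)

From HB Require Import structures.
From mathcomp Require Import all_boot all_order all_algebra.
From mathcomp Require Import all_classical all_reals all_analysis.
From mathcomp Require Import complex.
Set Implicit Arguments. Unset Strict Implicit. Unset Printing Implicit Defensive.
Import Order.TTheory GRing.Theory Num.Theory ComplexField.
Import numFieldNormedType.Exports.
Local Open Scope ring_scope.
Local Open Scope classical_set_scope.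

Definition blaschke (R : realType) (gamma : R[i]) (a : seq R[i]) : R[i] -> R[i] :=
  fun z => gamma * \prod_(aj <- a) ((z - aj) / (1 - aj^* * z)).

Definition blaschke_data (R : realType) (d : nat) (gamma : R[i]) (a : seq R[i]) : Prop :=
  `|gamma| = 1 /\ size a = d /\ (forall aj, aj \in a -> `|aj| < 1).

Definition blaschke_comp (R : realType) (l : seq (R[i] * seq R[i])) : R[i] -> R[i] :=
  foldr (fun p f => blaschke p.1 p.2 \o f) id l.

(* Critical values of f: images of points z of the disk with f'(z) = 0
   (complex derivative: derivative of f : C -> C in direction 1 over the scalar field C). *)
Definition critical_values (R : realType) (f : R[i] -> R[i]) : set R[i] :=
  [set w | `|w| < 1 /\ exists z, `|z| < 1 /\
       is_derive (z : R[i]^o) (1 : R[i]^o) (f : R[i]^o -> R[i]^o) 0 /\ f z = w].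

(* A degree-2 Blaschke product B has at most one critical point c in the disk:
   clearing denominators, B' vanishes exactly at the roots of a self-inversive
   quadratic, whose two roots are mirror images in the unit circle.  By the chain
   rule a critical point z of B o F is either a critical point of F or satisfies
   F z = c, so the critical values of B o F lie in B (critical values of F) plus
   the single point B c; induction on the number of factors concludes. *)

From HB Require Import structures.
From mathcomp Require Import all_boot all_order all_algebra.
From mathcomp Require Import all_classical all_reals all_analysis.
From mathcomp Require Import complex.
From mathcomp Require Import ring.
Import Order.TTheory GRing.Theory Num.Theory ComplexField.
Import numFieldNormedType.Exports.
Local Open Scope ring_scope.
Local Open Scope classical_set_scope.

Lemma is_derive_unique {K : numFieldType} {V W : normedModType K}
    {f : V -> W} {x v : V} {df df' : W} :
  is_derive x v f df -> is_derive x v f df' -> df = df'.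
Proof. by move=> [_ <-] [_ <-]. Qed.

Lemma is_derive1_comp_numField {K : numFieldType} {f g : K -> K} {x df dg : K} :
  is_derive x 1 f df -> is_derive (f x) 1 g dg -> is_derive x 1 (g \o f) (dg * df).
Proof.
move=> [/derivable1_diffP fx <-] [/derivable1_diffP gfx <-].
have gfx' : differentiable (g \o f) x by exact: differentiable_comp.
apply: DeriveDef; first exact/derivable1_diffP.
rewrite !deriveE // diff_comp //= -[X in 'd _ _ X = _]mulr1.
by rewrite [LHS]linearZ mulrC.
Qed.

Section Mobius.
Context {K : numClosedFieldType}.
Implicit Types a z : K.

Definition mobius a z := (z - a) / (1 - a^* * z).
Definition mobius' a z := (1 - a * a^*) / (1 - a^* * z) ^+ 2.

Lemma mobius_den_neq0 {a z} : `|a| < 1 -> `|z| <= 1 -> 1 - a^* * z != 0.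
Proof.
move=> a1 z1; rewrite subr_eq0; apply/eqP => /(congr1 Num.norm).
rewrite normr1 normrM norm_conjC => /esym/eqP; apply/negP.
by rewrite lt_eqF // (le_lt_trans _ a1) // ler_piMr.
Qed.

Lemma norm_mobius_lt1 {a z} : `|a| < 1 -> `|z| < 1 -> `|mobius a z| < 1.
Proof.
move=> a1 z1; have den0 : 1 - a^* * z != 0 by rewrite mobius_den_neq0 // ltW.
rewrite normrM normfV ltr_pdivrMr ?normr_gt0 // mul1r.
have gap : `|1 - a^* * z| ^+ 2 - `|z - a| ^+ 2 = (1 - `|a| ^+ 2) * (1 - `|z| ^+ 2).
  by rewrite !normCK !rmorphB /= !rmorphM /= rmorph1 conjCK; ring.
rewrite -(ltr_pXn2r (n := 2)) ?nnegrE // -subr_gt0 gap.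
by rewrite mulr_gt0 // subr_gt0 expr_lt1.
Qed.

Lemma is_derive_mobius {a z} : 1 - a^* * z != 0 -> is_derive z 1 (mobius a) (mobius' a z).
Proof.
move=> den0.
have dnum : is_derive z 1 (fun y : K => y - a) 1.
  by apply: is_derive_eq; rewrite subr0.
have dden : is_derive z 1 (fun y : K => 1 - a^* * y) (- a^*).
  by apply: is_derive_eq; rewrite [_ *: _]mulr1 sub0r.
have dinv : is_derive z 1 (fun y : K => (1 - a^* * y)^-1) (- (1 - a^* * z) ^- 2 *: - a^*).
  split; first by apply: derivableV => //; case: dden.
  by rewrite deriveV //; case: dden => _ ->.
have := is_deriveM dnum dinv; rewrite /mobius' => /is_derive_eq; apply.
by rewrite /GRing.scale /=; field.
Qed.

Definition blaschke2_numer (a1 a2 z : K) : K :=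
  (1 - a1 * a1^*) * ((z - a2) * (1 - a2^* * z)) +
  (1 - a2 * a2^*) * ((z - a1) * (1 - a1^* * z)).

Lemma blaschke2_derivE (g a1 a2 z : K) : 1 - a1^* * z != 0 -> 1 - a2^* * z != 0 ->
  g * (mobius' a1 z * mobius a2 z + mobius a1 z * mobius' a2 z) =
  g * blaschke2_numer a1 a2 z / ((1 - a1^* * z) ^+ 2 * (1 - a2^* * z) ^+ 2).
Proof.
by move=> den1 den2; rewrite /mobius /mobius' /blaschke2_numer; field; rewrite den1 den2.
Qed.

(* [blaschke2_numer a1 a2] is the self-inversive quadratic [- al z^2 + be z - al^*]
   with [be > 0]: if [al != 0] the product of its roots has modulus 1, so at most
   one of them lies in the disk; if [al = 0] its only root is 0. *)
Lemma blaschke2_numer_root_unique (a1 a2 z1 z2 : K) :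
  `|a1| < 1 -> `|a2| < 1 -> `|z1| < 1 -> `|z2| < 1 ->
  blaschke2_numer a1 a2 z1 = 0 -> blaschke2_numer a1 a2 z2 = 0 -> z1 = z2.
Proof.
move=> a1D a2D z1D z2D N1 N2.
set A1 := 1 - a1 * a1^*; set A2 := 1 - a2 * a2^*.
set al := A1 * a2^* + A2 * a1^*.
set be := A1 * (1 + a2 * a2^*) + A2 * (1 + a1 * a1^*).
have Nquad z : blaschke2_numer a1 a2 z = - al * z ^+ 2 + be * z - al^*.
  rewrite /blaschke2_numer /al /be /A1 /A2 !rmorphD /= !rmorphM /= !rmorphB /=.
  by rewrite rmorph1 !rmorphM /= !conjCK; ring.
have be_gt0 : 0 < be.
  have A_gt0 a : `|a| < 1 -> 0 < 1 - a * a^* by rewrite -normCK subr_gt0 expr_lt1.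
  have Ap_gt0 a : 0 < 1 + a * a^* by rewrite -normCK ltr_wpDr.
  by rewrite addr_gt0 // mulr_gt0 ?A_gt0 ?Ap_gt0.
have [al0 | al_neq0] := eqVneq al 0.
  have root0 z : blaschke2_numer a1 a2 z = 0 -> z = 0.
    by rewrite Nquad al0 rmorph0 !(oppr0, mul0r, add0r, subr0) => /eqP;
      rewrite mulf_eq0 gt_eqF //= => /eqP.
  by rewrite (root0 _ N1) (root0 _ N2).
have : (z1 - z2) * (al^* - al * z1 * z2) =
    z2 * blaschke2_numer a1 a2 z1 - z1 * blaschke2_numer a1 a2 z2.
  by rewrite !Nquad; ring.
rewrite N1 N2 !mulr0 subrr => /eqP; rewrite mulf_eq0 subr_eq0 => /orP[/eqP // | ].
have z12D : `|z1 * z2| < 1 by rewrite normrM -[1]mul1r ltr_pM.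
rewrite subr_eq0 -mulrA => /eqP/(congr1 Num.norm).
rewrite norm_conjC normrM -{1}[`|al|]mulr1 => /mulfI; rewrite normr_eq0 => /(_ al_neq0) z12_1.
by move: z12D; rewrite -z12_1 ltxx.
Qed.
End Mobius.

Section Blaschke.
Context {R : realType}.
Local Notation C := R[i].
Implicit Types (g z : C) (a : seq C).

Lemma blaschkeE g a : blaschke g a = fun z => g * \prod_(aj <- a) mobius aj z.
Proof. by []. Qed.

Lemma norm_blaschke_lt1 d g a z : blaschke_data d g a -> (0 < d)%N ->
  `|z| < 1 -> `|blaschke g a z| < 1.
Proof.
case: a => [|a0 a] [g1 [<- aD]] // _ zD.
rewrite blaschkeE /= big_cons normrM g1 mul1r normrM.
have mD aj : aj \in a0 :: a -> `|mobius aj z| < 1.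
  by move=> /aD ajD; rewrite norm_mobius_lt1.
apply: le_lt_trans (mD _ (mem_head _ _)); rewrite ler_piMr // normr_prod big_seq.
by apply: prodr_ile1 => aj ajD; rewrite normr_ge0 ltW // mD // inE ajD orbT.
Qed.

Lemma derivable_blaschke g a z : (forall aj, aj \in a -> `|aj| < 1) -> `|z| < 1 ->
  derivable (blaschke g a : C^o -> C^o) z 1.
Proof.
move=> aD zD; rewrite blaschkeE; apply: derivableZ.
elim: a aD => [|a0 a IH] aD.
  by under eq_fun do rewrite big_nil; exact: derivable_cst.
under eq_fun do rewrite big_cons.
apply: derivableM; last by apply: IH => aj ajD; rewrite aD // inE ajD orbT.
have [] // := is_derive_mobius (mobius_den_neq0 (aD _ (mem_head _ _)) (ltW zD)).
Qed.

Lemma is_derive_blaschke2 g {a1 a2 z : C} : 1 - a1^* * z != 0 -> 1 - a2^* * z != 0 ->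
  is_derive (z : C^o) 1 (blaschke g [:: a1; a2] : C^o -> C^o)
    (g * (mobius' a1 z * mobius a2 z + mobius a1 z * mobius' a2 z)).
Proof.
move=> den1 den2; rewrite blaschkeE.
under eq_fun do rewrite !big_cons big_nil mulr1.
have := is_deriveZ g (is_deriveM (is_derive_mobius den1) (is_derive_mobius den2)).
by move/is_derive_eq; apply; rewrite /GRing.scale /=; ring.
Qed.

Lemma blaschke2_critical_point {g a} : blaschke_data 2 g a ->
  exists c : C, forall z, `|z| < 1 ->
    is_derive (z : C^o) 1 (blaschke g a : C^o -> C^o) 0 -> z = c.
Proof.
move=> [g1 [+ aD]]; case: a aD => [|a1 [|a2 []]] // aD _.
have a1D : `|a1| < 1 by rewrite aD // mem_head.
have a2D : `|a2| < 1 by rewrite aD // !inE eqxx orbT.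
have numer0 z : `|z| < 1 -> is_derive (z : C^o) 1 (blaschke g [:: a1; a2] : C^o -> C^o) 0 ->
    blaschke2_numer a1 a2 z = 0.
  move=> zD dB0; have den1 := mobius_den_neq0 a1D (ltW zD).
  have den2 := mobius_den_neq0 a2D (ltW zD).
  have := is_derive_unique dB0 (is_derive_blaschke2 g den1 den2).
  rewrite blaschke2_derivE // => /esym/eqP.
  rewrite !mulf_eq0 invr_eq0 mulf_eq0 !expf_eq0 /= (negbTE den1) (negbTE den2).
  by rewrite -normr_eq0 g1 oner_eq0 !orbF => /eqP.
have [[c [cD dc]] | none] := pselect (exists c : C,
    `|c| < 1 /\ is_derive (c : C^o) 1 (blaschke g [:: a1; a2] : C^o -> C^o) 0).
  exists c => z zD dz.
  exact: blaschke2_numer_root_unique a1D a2D zD cD (numer0 _ zD dz) (numer0 _ cD dc).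
by exists 0 => z zD dz; case: none; exists z.
Qed.

Lemma critical_values_id : critical_values (@id C) = set0.
Proof.
apply/seteqP; split => // w [_ [z [_ [dz _]]]].
by have /eqP := is_derive_unique dz (is_derive_id _ _); rewrite eq_sym oner_eq0.
Qed.

Lemma critical_values_comp {f g : C -> C} {c} :
  (forall z, `|z| < 1 -> `|f z| < 1) ->
  (forall z, `|z| < 1 -> derivable (f : C^o -> C^o) z 1) ->
  (forall w, `|w| < 1 -> derivable (g : C^o -> C^o) w 1) ->
  (forall w, `|w| < 1 -> is_derive (w : C^o) 1 (g : C^o -> C^o) 0 -> w = c) ->
  critical_values (g \o f) `<=` g @` critical_values f `|` [set g c].
Proof.
move=> fD df dg crit_c _ [_ [z [zD [dgf <-]]]].
have dfz := derivableP (df _ zD); have dgfz := derivableP (dg _ (fD _ zD)).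
have /esym/eqP := is_derive_unique dgf (is_derive1_comp_numField dfz dgfz).
rewrite mulf_eq0 => /orP[/eqP Dg0 | /eqP Df0].
  have fz_c : f z = c by apply: crit_c (fD _ zD) _; rewrite -Dg0.
  by right; rewrite /= fz_c.
left; exists (f z) => //; split; first exact: fD.
by exists z; rewrite -Df0.
Qed.

Lemma norm_blaschke_comp_lt1 d l z :
  (forall p, p \in l -> blaschke_data d.+1 p.1 p.2) ->
  `|z| < 1 -> `|blaschke_comp l z| < 1.
Proof.
elim: l => [|p l IH] lD zD //=.
apply: norm_blaschke_lt1 (lD _ (mem_head _ _)) _ _ => //.
by apply: IH => // q ql; apply: lD; rewrite inE ql orbT.
Qed.

Lemma derivable_blaschke_comp d l z :
  (forall p, p \in l -> blaschke_data d.+1 p.1 p.2) ->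
  `|z| < 1 -> derivable (blaschke_comp l : C^o -> C^o) z 1.
Proof.
elim: l => [|[g a] l IH] lD zD; first exact: derivable_id.
have lD' q : q \in l -> blaschke_data d.+1 q.1 q.2.
  by move=> ql; apply: lD; rewrite inE ql orbT.
have [_ [_ aD]] := lD _ (mem_head _ _).
have dl := derivableP (IH lD' zD).
have dB := derivableP (derivable_blaschke g a _ aD (norm_blaschke_comp_lt1 _ _ _ lD' zD)).
by case: (is_derive1_comp_numField dl dB).
Qed.

End Blaschke.

Theorem corollary4p4 (R : realType) (n : nat) (l : seq (R[i] * seq R[i]))
  (hn : size l = n) (hdeg : forall p, p \in l -> blaschke_data 2 p.1 p.2) :
  exists s : seq R[i], (size s <= n)%N /\
    critical_values (blaschke_comp l) `<=` [set` s].
Proof.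
subst n; elim: l hdeg => [|[g a] l IH] hdeg.
  by exists [::]; split; rewrite // /blaschke_comp /= critical_values_id.
have lD p : p \in l -> blaschke_data 2 p.1 p.2.
  by move=> pl; apply: hdeg; rewrite inE pl orbT.
have gaD : blaschke_data 2 g a := hdeg _ (mem_head _ _).
have [s [s_size crit_s]] := IH lD.
have [c crit_c] := blaschke2_critical_point gaD.
have fD z : `|z| < 1 -> `|blaschke_comp l z| < 1 := norm_blaschke_comp_lt1 _ _ _ lD.
have df z : `|z| < 1 -> derivable (blaschke_comp l : R[i]^o -> R[i]^o) z 1 :=
  derivable_blaschke_comp _ _ _ lD.
have dg w : `|w| < 1 -> derivable (blaschke g a : R[i]^o -> R[i]^o) w 1.
  by apply: derivable_blaschke; case: gaD => _ [].
exists (blaschke g a c :: map (blaschke g a) s); split; first by rewrite /= size_map.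
apply: subset_trans (critical_values_comp fD df dg crit_c) _.
by move=> _ [[w /crit_s ws <-] | ->]; rewrite /= inE ?eqxx // map_f ?orbT.
Qed.
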